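(* Assume the matching setting described in the context. (a) For every matching $M=\{e_1,\ldots,e_k\}$, every $\sigma\in\Omega$ and every ordering of $M$, the iterates $\sigma_0=\sigma$, $\sigma_i=\hat\psi(\{e_i\},\sigma_{i-1})$ satisfy $\{e_1,\ldots,e_i\}\subseteq\sigma_i$ for all $i\in[k]$. In particular $M\subseteq\hat\psi(M,\sigma)$. (b) For every $\sigma\in\Omega$ and all matchings $M,M'$ with $M\cup M'$ a matching, $\hat\psi(M,\hat\psi(M',\sigma))=\hat\psi(M',\hat\psi(M,\sigma))$. Consequently, the resampling oracles $\rho$ defined from $\psi$ are weakly commutative with respect to $\sim$. (c) $(F,\sim)$ is a potential causality graph for these resampling oracles.
   Context: Let $G=(V,E)$ be an undirected graph with $|V|=2n$ of one of the following two types: [P1] $G$ is the complete graph on $V$; [P2] $V$ is partitioned into sets $A_1,B_1,\ldots,A_r,B_r$ with $|A_i|=|B_i|$, and $E=\{\{u,v\}:u\in A_i,v\in B_i,i\in[r]\}$. In both cases $G$ has the property that whenever $(u',u,v,v')$ is a path in $G$ with distinct nodes, $\{u',v'\}\in E$. $\Omega$ is the set of perfect matchings of $G$ (each viewed as a set of edges), and $\mathcal{M}$ is the set of all matchings of $G$. For $M\in\mathcal{M}$ let $f_M=\{\sigma\in\Omega:M\subseteq\sigma\}$. The flaw set $F$ is any set of flaws of the form $f_M$, $M\in\mathcal{M}$, each nonempty. Define $f_M\sim f_{M'}$ iff $M\cup M'$ is not a matching or $M=M'$. Map $\hat\psi:\mathcal{M}\times\Omega\to\Omega$. For a single edge $e=\{u,v\}$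 let $u',v'$ be the nodes with $\{u,u'\},\{v,v'\}\in\sigma$, and set $\hat\psi(\{e\},\sigma)=(\sigma\setminus\{\{u,u'\},\{v,v'\}\})\cup\{\{u,v\},\{u',v'\}\}$; this equals $\sigma$ if $e\in\sigma$. For $M=\{e_1,\ldots,e_k\}$ (with $\hat\psi(\varnothing,\sigma)=\sigma$), set $\sigma_0=\sigma$, $\sigma_i=\hat\psi(\{e_i\},\sigma_{i-1})$ and $\hat\psi(M,\sigma)=\sigma_k$; the result does not depend on the ordering of $M$. Resampling oracles: for $f_M\in F$ and $\sigma\in f_M$ let $A(f_M,\sigma)=\{\sigma'\in\Omega:\hat\psi(M,\sigma')=\sigma\}$, and let $\rho(\cdot\mid f_M,\sigma)$ be uniform on $A(f_M,\sigma)$. A step $\sigma\xrightarrow{f}\sigma'$ means $\sigma\in f$ and $\sigma'\in A(f,\sigma)$. Weak commutativity w.r.t. $\sim$: there is an injective map sending each two-step walk $\sigma_1\xrightarrow{f}\sigma_2\xrightarrow{g}\sigma_3$ with $f\not\sim g$ to a walk $\sigma_1\xrightarrow{g}\sigma_2'\xrightarrow{f}\sigma_3$. $(F,\sim)$ is a potential causality graph if for every step $\sigma\xrightarrow{f}\sigma'$ one has $\{g\in F:\sigma'\in g\}\subseteq(\{g\in F:\sigma\in g\}\setminus\{f\})\cup\{g:f\sim g\}$. *)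

From mathcomp Require Import all_boot.
Set Implicit Arguments. Unset Strict Implicit. Unset Printing Implicit Defensive.

Section Matchings.
Variable V : finType.
Variable E : rel V.

Definition graph_P1 : Prop := forall u v : V, E u v = (u != v).

Definition graph_P2 : Prop :=
  exists (r : nat) (A B : 'I_r -> {set V}),
    [/\ (forall i j, i != j -> [disjoint (A i) & (A j)]),
        (forall i j, i != j -> [disjoint (B i) & (B j)]),
        (forall i j, [disjoint (A i) & (B j)]),
        (forall x : V, exists i, (x \in A i) || (x \in B i)) &
        ((forall i, #|A i| = #|B i|) /\
        (forall u v, E u v =
           [exists i, ((u \in A i) && (v \in B i)) || ((v \in A i) && (u \in B i))]))].

Definition is_edge (e : {set V}) : bool :=
  [exists u, exists v, E u v && (e == [set u; v])].

Definition is_matching (M : {set {set V}}) : bool :=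
  [forall e in M, is_edge e] &&
  [forall e1 in M, forall e2 in M, (e1 != e2) ==> [disjoint e1 & e2]].

(* perfect matching: a matching covering every vertex (elements of Omega) *)
Definition is_perfect (s : {set {set V}}) : bool :=
  is_matching s && [forall x : V, [exists e in s, x \in e]].

Definition flaw (M : {set {set V}}) : {set {set {set V}}} :=
  [set s | is_perfect s & M \subset s].

Definition flaw_rel (M M' : {set {set V}}) : bool :=
  ~~ is_matching (M :|: M') || (M == M').

Definition partner (s : {set {set V}}) (u : V) : V :=
  odflt u [pick w | [set u; w] \in s].

Definition psi_pair (s : {set {set V}}) (u v : V) : {set {set V}} :=
  let u' := partner s u in let v' := partner s v in
  (s :\: [set [set u; u']; [set v; v']]) :|: [set [set u; v]; [set u'; v']].

Definition psi1 (e : {set V}) (s : {set {set V}}) : {set {set V}} :=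
  match enum e with
  | [:: u; v] => psi_pair s u v
  | _ => s
  end.

Definition psi_seq (es : seq {set V}) (s : {set {set V}}) : {set {set V}} :=
  foldl (fun t e => psi1 e t) s es.

(* \hat\psi(M, s), using the canonical enumeration of M as the ordering *)
Definition psi (M : {set {set V}}) (s : {set {set V}}) : {set {set V}} :=
  psi_seq (enum M) s.

Definition Aset (M : {set {set V}}) (s : {set {set V}}) : {set {set {set V}}} :=
  [set s' | is_perfect s' & psi M s' == s].

Definition step (M : {set {set V}}) (s s' : {set {set V}}) : Prop :=
  s \in flaw M /\ s' \in Aset M s.

(* two-step walks (f, s1, s2, g, s3), flaws indexed by their matchings *)
Definition walk2 := ({set {set V}} * {set {set V}} * {set {set V}}
                     * {set {set V}} * {set {set V}})%type.

Definition is_walk2 (FM : {set {set {set V}}}) (w : walk2) : Prop :=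
  let: (f, s1, s2, g, s3) := w in
  [/\ f \in FM, g \in FM, step f s1 s2 & step g s2 s3].

Definition weakly_commutative (FM : {set {set {set V}}}) : Prop :=
  exists phi : walk2 -> walk2,
    (forall w1 w2, is_walk2 FM w1 -> ~~ flaw_rel w1.1.1.1.1 w1.1.2 ->
                   is_walk2 FM w2 -> ~~ flaw_rel w2.1.1.1.1 w2.1.2 ->
                   phi w1 = phi w2 -> w1 = w2) /\
    (forall w, is_walk2 FM w -> ~~ flaw_rel w.1.1.1.1 w.1.2 ->
       let: (f, s1, _, g, s3) := w in
       exists s2', phi w = (g, s1, s2', f, s3) /\ is_walk2 FM (phi w)).

Definition potential_causality_graph (FM : {set {set {set V}}}) : Prop :=
  forall M s s', M \in FM -> step M s s' ->
    forall M', M' \in FM -> s' \in flaw M' ->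
      (s \in flaw M' /\ M' != M) \/ flaw_rel M M'.

End Matchings.

(* A perfect matching is the same thing as a fixed-point-free involution [p] of
   the vertices, the matching being {{z, p z}}.  In these terms psi({a, b}, -)
   is the update [rematch p a b], which pairs a with b and p a with p b.  For
   disjoint (or equal) edges these updates commute -- a finite case analysis --
   so psi(M, -) does not depend on the ordering of M, psi(M, -) and psi(M', -)
   commute when M u M' is a matching, and later steps never remove an edge of M
   inserted earlier.  The path property of G makes p a and p b adjacent, so
   rematching stays inside the perfect matchings of G.  Weak commutativity is
   witnessed by (f, s1, s2, g, s3) |-> (g, s1, psi(f, s3), f, s3), and the
   causality property holds because psi(M, -) keeps every edge disjoint from M. *)

From mathcomp Require Import all_boot.
From Stdlib Require Import FunctionalExtensionality.
Set Implicit Arguments. Unset Strict Implicit. Unset Printing Implicit Defensive.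

Section Rematch.
Variable T : eqType.

Definition fpf_involution (p : T -> T) := involutive p /\ forall z, p z != z.

Definition rematch (p : T -> T) (a b : T) : T -> T := fun z =>
  if z == a then b else if z == b then a else if z == p a then p b
  else if z == p b then p a else p z.

(* Splits on every equality test among the points involved; the impossible
   branches contradict involutivity or the absence of fixed points. *)
Ltac rematch_case p pK p_fpf :=
  match goal with
  | H : ?a = ?a |- _ => clear H
  | H : ?a <> ?a |- _ => by case: H
  | H : p ?a = ?a |- _ => by move: (p_fpf a); rewrite H eqxx
  | H : ?a = p ?a |- _ => by move: (p_fpf a); rewrite -H eqxx
  | H : p ?a = p ?b |- _ => move/(can_inj pK): H => H
  | H : ?a = p ?b |- _ => is_var a; subst a
  | H : p ?b = ?a |- _ => is_var a; subst a
  | H : ?a = ?b |- _ => is_var a; subst a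
  | H : ?a = ?b |- _ => is_var b; subst b
  | |- context [p (p ?a)] => rewrite (pK a)
  | |- context [?a == ?a] => rewrite eqxx
  | |- context [if ?a == ?b then _ else _] =>
      let h := fresh "h" in case: (a =P b) => h
  | H : context [p (p ?a)] |- _ => rewrite (pK a) in H
  | H : context [?a == ?a] |- _ => rewrite eqxx in H
  | H : context [if ?a == ?b then _ else _] |- _ =>
      let h := fresh "h" in move: H; case: (a =P b) => h H
  end.

Ltac rematch_cases p pK p_fpf :=
  repeat (progress (try rematch_case p pK p_fpf)); try congruence;
  try (by apply/eqP; rewrite ?p_fpf // eq_sym p_fpf).

Lemma rematch_fpf_involution p a b :
  fpf_involution p -> a != b -> fpf_involution (rematch p a b).
Proof.
case=> pK p_fpf /eqP ab; split=> [z|z]; last apply/eqP;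
  rewrite /rematch; rematch_cases p pK p_fpf.
Qed.

Lemma rematch_notin p a b z : z != a -> z != b -> z != p a -> z != p b ->
  rematch p a b z = p z.
Proof. by rewrite /rematch => /negbTE-> /negbTE-> /negbTE-> /negbTE->. Qed.

Lemma rematchC p a b x y : fpf_involution p ->
  a != b -> a != x -> a != y -> b != x -> b != y -> x != y ->
  rematch (rematch p a b) x y = rematch (rematch p x y) a b.
Proof.
case=> pK p_fpf /eqP ab /eqP ax /eqP ay /eqP bx /eqP b_y /eqP xy.
apply: functional_extensionality => z; rewrite /rematch.
rematch_cases p pK p_fpf.
Qed.

End Rematch.

Section Pairings.
Variable V : finType.
Implicit Types (p : V -> V) (d e f : {set V}) (M s : {set {set V}}) (l : seq {set V}).

Definition matching_of p : {set {set V}} := [set [set z; p z] | z : V].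

Lemma mem_matching_of p z : [set z; p z] \in matching_of p.
Proof. exact: imset_f. Qed.

Lemma matching_ofP p e : reflect (exists z, e = [set z; p z]) (e \in matching_of p).
Proof. by apply: (iffP imsetP) => [[z _ ->]|[z ->]]; exists z. Qed.

Lemma eq_set2 (a b c d : V) :
  [set a; b] = [set c; d] -> (a = c /\ b = d) \/ (a = d /\ b = c).
Proof.
move=> ab_cd.
have: a \in [set c; d] by rewrite -ab_cd set21.
have: b \in [set c; d] by rewrite -ab_cd set22.
have: c \in [set a; b] by rewrite ab_cd set21.
have: d \in [set a; b] by rewrite ab_cd set22.
rewrite !inE => /orP[]/eqP d_eq /orP[]/eqP c_eq /orP[]/eqP b_eq /orP[]/eqP a_eq;
  by [left | right]; split; congruence.
Qed.

Lemma pair_of_mem p y w : involutive p -> w \in [set y; p y] -> [set y; p y] = [set w; p w].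
Proof. by move=> pK /set2P[]->; rewrite ?pK // setUC. Qed.

Lemma eq_pair_of p y c : involutive p ->
  ([set y; p y] == [set c; p c]) = (y \in [set c; p c]).
Proof. by move=> pK; apply/eqP/idP => [<-|/(pair_of_mem pK)->]; rewrite ?set21. Qed.

Lemma partner_matching_of p z : fpf_involution p -> partner (matching_of p) z = p z.
Proof.
case=> pK _; rewrite /partner; case: pickP => [w|/(_ (p z))]; last by rewrite mem_matching_of.
by case/matching_ofP => y /eq_set2[[-> ->]|[-> ->]] /=; rewrite ?pK.
Qed.

Lemma psi_pair_matching_of p a b : fpf_involution p -> a != b ->
  psi_pair (matching_of p) a b = matching_of (rematch p a b).
Proof.
move=> p_fpfi ab; have [pK p_fpf] := p_fpfi.
have q_a : rematch p a b a = b by rewrite /rematch eqxx.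
have pa_pb : [set p a; p b] \in matching_of (rematch p a b).
  have [pab|pab] := eqVneq (p a) b.
    have pba : p b = a by rewrite -pab pK.
    by rewrite pab pba setUC; move: (mem_matching_of (rematch p a b) a); rewrite q_a.
  rewrite -[p b](_ : rematch p a b (p a) = _) ?mem_matching_of //.
  by rewrite /rematch (negbTE (p_fpf a)) (negbTE pab) eqxx.
rewrite /psi_pair !partner_matching_of //; apply/setP => e; rewrite !inE.
apply/idP/idP => [/orP[/andP[]|/orP[]/eqP->]|].
- move=> + /matching_ofP[y e_y]; rewrite e_y !eq_pair_of // !inE.
  move=> /norP[/norP[ya ypa] /norP[yb ypb]].
  by rewrite -(rematch_notin ya yb ypa ypb) mem_matching_of.
- by move: (mem_matching_of (rematch p a b) a); rewrite q_a.
- exact: pa_pb.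
case/matching_ofP => y ->; rewrite /rematch.
have [->|ya] := eqVneq y a; first by rewrite eqxx orbT.
have [->|yb] := eqVneq y b; first by rewrite setUC eqxx orbT.
have [->|ypa] := eqVneq y (p a); first by rewrite eqxx !orbT.
have [->|ypb] := eqVneq y (p b); first by rewrite setUC eqxx !orbT.
rewrite mem_matching_of andbT !eq_pair_of // !inE.
by rewrite (negbTE ya) (negbTE yb) (negbTE ypa) (negbTE ypb).
Qed.

Definition rematch_edge e p : V -> V :=
  if enum e is [:: a; b] then rematch p a b else p.

Definition rematch_seq l p : V -> V := foldl (fun q e => rematch_edge e q) p l.

Definition eq_or_disjoint e f := (e == f) || [disjoint e & f].

Lemma enum_card2 e : #|e| = 2 -> exists a b, enum e = [:: a; b].
Proof. by rewrite cardE; case: (enum e) => [|a [|b []]] // _; exists a, b. Qed.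

Lemma enum2_set e a b : enum e = [:: a; b] -> e = [set a; b].
Proof. by move=> e_ab; apply/setP => x; rewrite -mem_enum e_ab !inE. Qed.

Lemma enum2_neq e a b : enum e = [:: a; b] -> a != b.
Proof. by move=> e_ab; have := enum_uniq (mem e); rewrite e_ab /= inE andbT. Qed.

Lemma rematch_edge_fpf_involution e p :
  fpf_involution p -> fpf_involution (rematch_edge e p).
Proof.
rewrite /rematch_edge; case e_ab: (enum e) => [|a [|b []]] // p_fpfi.
exact: rematch_fpf_involution (enum2_neq e_ab).
Qed.

Lemma rematch_seq_fpf_involution l p :
  fpf_involution p -> fpf_involution (rematch_seq l p).
Proof. by elim: l p => //= e l IHl p /(rematch_edge_fpf_involution e)/IHl. Qed.

Lemma psi1_matching_of e p : fpf_involution p ->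
  psi1 e (matching_of p) = matching_of (rematch_edge e p).
Proof.
rewrite /psi1 /rematch_edge; case e_ab: (enum e) => [|a [|b []]] // p_fpfi.
exact: psi_pair_matching_of (enum2_neq e_ab).
Qed.

Lemma psi_seq_matching_of l p : fpf_involution p ->
  psi_seq l (matching_of p) = matching_of (rematch_seq l p).
Proof.
elim: l p => //= e l IHl p p_fpfi.
rewrite /psi_seq /= -/(psi_seq l _) psi1_matching_of // IHl //.
exact: rematch_edge_fpf_involution.
Qed.

Lemma psi_matching_of M p : fpf_involution p ->
  psi M (matching_of p) = matching_of (rematch_seq (enum M) p).
Proof. exact: psi_seq_matching_of. Qed.

Lemma rematch_edgeC e f p : fpf_involution p -> eq_or_disjoint e f ->
  rematch_edge e (rematch_edge f p) = rematch_edge f (rematch_edge e p).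
Proof.
move=> p_fpfi /orP[/eqP->//|ef]; rewrite /rematch_edge.
case e_ab: (enum e) => [|a [|b []]] //; case f_xy: (enum f) => [|x [|y []]] //.
have neq u w : u \in e -> w \in f -> u != w.
  by move=> ue; apply: contraTneq => <-; rewrite (disjointFr ef ue).
have [ae be] : a \in e /\ b \in e by rewrite (enum2_set e_ab) set21 set22.
have [xf yf] : x \in f /\ y \in f by rewrite (enum2_set f_xy) set21 set22.
exact: esym (rematchC p_fpfi (enum2_neq e_ab) (neq _ _ ae xf) (neq _ _ ae yf)
  (neq _ _ be xf) (neq _ _ be yf) (enum2_neq f_xy)).
Qed.

Lemma rematch_edge_seqC e l p : fpf_involution p -> {in l, forall f, eq_or_disjoint e f} ->
  rematch_edge e (rematch_seq l p) = rematch_seq l (rematch_edge e p).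
Proof.
elim: l p => //= f l IHl p p_fpfi e_l.
rewrite IHl; first by rewrite rematch_edgeC // e_l ?mem_head.
  exact: rematch_edge_fpf_involution.
by move=> g gl; apply: e_l; rewrite inE gl orbT.
Qed.

Lemma rematch_seq_cat l1 l2 p :
  rematch_seq (l1 ++ l2) p = rematch_seq l2 (rematch_seq l1 p).
Proof. exact: foldl_cat. Qed.

Lemma perm_rematch_seq l l' p : fpf_involution p ->
  {in l &, forall e f, eq_or_disjoint e f} -> perm_eq l l' ->
  rematch_seq l p = rematch_seq l' p.
Proof.
elim: l l' p => [|e l IHl] l' p p_fpfi l_compat; first by rewrite perm_sym => /perm_nilP->.
move=> eq_l; have e_l' : e \in l' by rewrite -(perm_mem eq_l) mem_head.
case/splitPr: e_l' eq_l => l2 l3 eq_l.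
have eq_l' : perm_eq l (l2 ++ l3).
  by rewrite -(perm_cons e); apply: perm_trans eq_l _; rewrite -cat1s perm_catCA.
rewrite rematch_seq_cat /= rematch_edge_seqC //; last first.
  by move=> f fl2; apply: l_compat; rewrite ?mem_head // (perm_mem eq_l) mem_cat fl2.
rewrite -rematch_seq_cat; apply: IHl => //; first exact: rematch_edge_fpf_involution.
by move=> f g fl gl; apply: l_compat; rewrite inE ?fl ?gl orbT.
Qed.

Lemma mem_matching_of_rematch_edge e p : #|e| = 2 -> e \in matching_of (rematch_edge e p).
Proof.
case/enum_card2 => a [b e_ab]; rewrite {1}(enum2_set e_ab) /rematch_edge e_ab.
by move: (mem_matching_of (rematch p a b) a); rewrite /rematch eqxx.
Qed.

Lemma matching_of_rematch_edge_disjoint d e p : fpf_involution p ->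
  d \in matching_of p -> [disjoint d & e] -> d \in matching_of (rematch_edge e p).
Proof.
case=> pK _ /matching_ofP[y ->] de; rewrite /rematch_edge.
case e_ab: (enum e) => [|a [|b []]]; rewrite ?mem_matching_of //.
have: [set y; p y] \subset ~: [set a; b] by rewrite -(enum2_set e_ab) -disjoints_subset.
rewrite subUset !sub1set !inE => /andP[/norP[ya yb] /norP[pya pyb]].
have ypa : y != p a by apply: contraNneq pya => ->; rewrite pK.
have ypb : y != p b by apply: contraNneq pyb => ->; rewrite pK.
by rewrite -(rematch_notin ya yb ypa ypb) mem_matching_of.
Qed.

Lemma matching_of_rematch_seq_disjoint d l p : fpf_involution p ->
  d \in matching_of p -> {in l, forall f, [disjoint d & f]} ->
  d \in matching_of (rematch_seq l p).
Proof.
elim: l p => //= f l IHl p p_fpfi dp d_l; apply: IHl.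
- exact: rematch_edge_fpf_involution.
- by apply: matching_of_rematch_edge_disjoint; rewrite ?d_l ?mem_head.
- by move=> g gl; apply: d_l; rewrite inE gl orbT.
Qed.

Lemma rematch_seq_covers l p : fpf_involution p -> {in l, forall e, #|e| = 2} ->
  {in l &, forall e f, eq_or_disjoint e f} ->
  [set e in l] \subset matching_of (rematch_seq l p).
Proof.
move=> p_fpfi; elim/last_ind: l => [|l e IHl] l_card l_compat.
  by apply/subsetP => d; rewrite inE.
have [l_card' l_compat'] : {in l, forall e, #|e| = 2} /\ {in l &, forall e f, eq_or_disjoint e f}.
  by split=> [f fl|f g fl gl]; [apply: l_card | apply: l_compat];
    rewrite mem_rcons inE ?fl ?gl orbT.
rewrite /rematch_seq foldl_rcons -/(rematch_seq l p); apply/subsetP => d.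
have e_in : e \in matching_of (rematch_edge e (rematch_seq l p)).
  by apply: mem_matching_of_rematch_edge; rewrite l_card // mem_rcons mem_head.
rewrite inE mem_rcons inE => /orP[/eqP->//|dl].
have := l_compat d e; rewrite !mem_rcons !inE dl eqxx orbT => /(_ isT isT) /orP[/eqP->//|de].
apply: matching_of_rematch_edge_disjoint de; first exact: rematch_seq_fpf_involution.
by apply: (subsetP (IHl l_card' l_compat')); rewrite inE.
Qed.

End Pairings.

Section Graph.
Variables (V : finType) (E : rel V).
Implicit Types (p : V -> V) (e f : {set V}) (M s : {set {set V}}) (l : seq {set V})
  (FM : {set {set {set V}}}).

Definition path3_closed :=
  forall u' u v v', E u' u -> E u v -> E v v' -> u' != v' -> E u' v'.

Lemma graph_P1_props : graph_P1 E -> [/\ irreflexive E, symmetric E & path3_closed].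
Proof.
move=> E_neq; split=> [u|u v|u' u v v' _ _ _]; rewrite ?E_neq ?eqxx //.
by rewrite eq_sym.
Qed.

Lemma graph_P2_props : graph_P2 E -> [/\ irreflexive E, symmetric E & path3_closed].
Proof.
case=> r [A [B [dA dB dAB _ [_ E_AB]]]].
have A_inj x i j : x \in A i -> x \in A j -> i = j.
  by move=> xi xj; apply/eqP; apply: contraTT xj => /dA/disjointFr->.
have B_inj x i j : x \in B i -> x \in B j -> i = j.
  by move=> xi xj; apply/eqP; apply: contraTT xj => /dB/disjointFr->.
have AB x i j : x \in A i -> x \in B j -> False.
  by move=> xi; rewrite (disjointFr (dAB i j) xi).
split.
- move=> u; rewrite E_AB; apply/negbTE/existsP => -[i /orP[]/andP[uA uB]]; exact: AB uA uB.
- by move=> u v; rewrite !E_AB; apply/existsP/existsP => -[i]; exists i; rewrite orbC.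
move=> u' u v v'; rewrite !E_AB.
move=> /existsP[i /orP[]/andP[H1 H2]] /existsP[j /orP[]/andP[H3 H4]]
       /existsP[k /orP[]/andP[H5 H6]] _;
  try by [case: (AB _ _ _ H3 H2) | case: (AB _ _ _ H3 H6) | case: (AB _ _ _ H1 H4)].
- move: (B_inj _ _ _ H4 H2) (A_inj _ _ _ H5 H3) => ji ki; subst j k.
  by apply/existsP; exists i; rewrite H1 H6.
- by move: (A_inj _ _ _ H3 H1) => ji; subst j; case: (AB _ _ _ H5 H4).
- move: (A_inj _ _ _ H3 H1) (B_inj _ _ _ H6 H4) => ji ki; subst j k.
  by apply/existsP; exists i; rewrite H2 H5 orbT.
Qed.

Lemma is_edgeP e : reflect (exists u v, E u v /\ e = [set u; v]) (is_edge E e).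
Proof.
apply: (iffP existsP) => [[u /existsP[v /andP[uv /eqP->]]]|[u [v [uv ->]]]].
  by exists u, v.
by exists u; apply/existsP; exists v; rewrite uv eqxx.
Qed.

Lemma matching_edge M e : is_matching E M -> e \in M -> is_edge E e.
Proof. by case/andP => /forall_inP + _ eM => /(_ e eM). Qed.

Lemma matching_eq_or_disjoint M : is_matching E M -> {in M &, forall e f, eq_or_disjoint e f}.
Proof.
case/andP => _ /forall_inP M_dis e f eM fM; rewrite /eq_or_disjoint.
case: eqVneq => //= ef.
by move/forall_inP: (M_dis e eM) => /(_ f fM) /implyP/(_ ef).
Qed.

Hypothesis E_irr : irreflexive E.
Hypothesis E_sym : symmetric E.

Lemma card_edge e : is_edge E e -> #|e| = 2.
Proof.
case/is_edgeP => u [v [uv ->]]; rewrite cards2.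
by case: eqVneq uv => [->|//]; rewrite E_irr.
Qed.

Definition along_edges (p : V -> V) := forall z, E z (p z).

Lemma perfect_matching_ofE s : is_perfect E s ->
  [/\ s = matching_of (partner s), fpf_involution (partner s) & along_edges (partner s)].
Proof.
case/andP => s_matching /forallP s_cover.
have s_edge e : e \in s -> exists u v, E u v /\ e = [set u; v].
  by move=> es; apply/is_edgeP; apply: matching_edge es.
have pair_neq z w : [set z; w] \in s -> w != z.
  case/s_edge => u [v [uv /eq_set2[][-> ->]]]; apply: contraTneq uv => ->;
  by rewrite E_irr.
have pair_uniq z w w' : [set z; w] \in s -> [set z; w'] \in s -> w = w'.
  move=> zw zw'; have [/eq_set2[][]//|] := eqVneq [set z; w] [set z; w'].
    by move=> _ wz; move: (pair_neq _ _ zw); rewrite wz eqxx.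
  move=> ne; have := matching_eq_or_disjoint s_matching zw zw'.
  by rewrite /eq_or_disjoint (negbTE ne) => /disjointFr/(_ (set21 z w)); rewrite set21.
have pair_partner z : [set z; partner s z] \in s.
  rewrite /partner; case: pickP => [w //|no_pair].
  case/exists_inP: (s_cover z) => e es; case/s_edge: es (es) => u [v [_ ->]] uv.
  by rewrite !inE => /orP[]/eqP zE; move: uv; rewrite -zE ?no_pair // setUC no_pair.
have partnerK : involutive (partner s).
  by move=> z; apply: (pair_uniq (partner s z)); rewrite // setUC.
split=> //.
- apply/setP => e; apply/idP/matching_ofP => [es|[z ->//]].
  case/s_edge: es (es) => u [v [_ ->]] es.
  by exists u; rewrite (pair_uniq _ _ _ es (pair_partner u)).
- by split=> // z; apply: pair_neq.
- move=> z; case/s_edge: (pair_partner z) => u [v [uv /eq_set2[][-> ->]//]].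
  by rewrite E_sym.
Qed.

Lemma matching_of_perfect p : fpf_involution p -> along_edges p -> is_perfect E (matching_of p).
Proof.
case=> pK p_fpf p_E; apply/andP; split; [apply/andP; split|].
- by apply/forall_inP => e /matching_ofP[z ->]; apply/is_edgeP; exists z, (p z).
- apply/forall_inP => e1 /matching_ofP[y ->]; apply/forall_inP => e2 /matching_ofP[z ->].
  apply/implyP; apply: contraTT => /pred0Pn[w /andP[/= wy wz]].
  by rewrite negbK (pair_of_mem pK wy) (pair_of_mem pK wz).
- by apply/forallP => z; apply/exists_inP; exists [set z; p z]; rewrite ?mem_matching_of ?set21.
Qed.

Hypothesis E_closed : path3_closed.

Lemma rematch_along p a b : fpf_involution p -> along_edges p -> E a b ->
  along_edges (rematch p a b).
Proof.
move=> [pK _] p_E ab z; rewrite /rematch.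
have pa_pb : E (p a) (p b).
  have pa_a : E (p a) a by rewrite E_sym.
  apply: (E_closed pa_a ab (p_E b)).
  by apply: contraTneq ab => /(can_inj pK)->; rewrite E_irr.
case: eqP => [->//|_]; case: eqP => [->|_]; first by rewrite E_sym.
case: eqP => [->//|_]; case: eqP => [->|_]; first by rewrite E_sym.
exact: p_E.
Qed.

Lemma rematch_edge_along e p : fpf_involution p -> along_edges p -> is_edge E e ->
  along_edges (rematch_edge e p).
Proof.
move=> p_fpfi p_E /is_edgeP[u [v [uv e_uv]]]; rewrite /rematch_edge.
case e_ab: (enum e) => [|a [|b []]] //; apply: rematch_along => //.
by move: e_uv; rewrite (enum2_set e_ab) => /eq_set2[][-> ->]; rewrite // E_sym.
Qed.

Lemma rematch_seq_along l p : {in l, forall e, is_edge E e} ->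
  fpf_involution p -> along_edges p -> along_edges (rematch_seq l p).
Proof.
elim: l p => //= e l IHl p l_edge p_fpfi p_E; apply: IHl.
- by move=> f fl; apply: l_edge; rewrite inE fl orbT.
- exact: rematch_edge_fpf_involution.
- by apply: rematch_edge_along; rewrite ?l_edge ?mem_head.
Qed.

Lemma psi_seq_perfect l s : {in l, forall e, is_edge E e} ->
  is_perfect E s -> is_perfect E (psi_seq l s).
Proof.
move=> l_edge /perfect_matching_ofE[s_eq p_fpfi p_E]; rewrite s_eq psi_seq_matching_of //.
apply: matching_of_perfect; first exact: rematch_seq_fpf_involution.
exact: rematch_seq_along.
Qed.

Lemma psi_perfect M s : is_matching E M -> is_perfect E s -> is_perfect E (psi M s).
Proof.
by move=> M_matching; apply: psi_seq_perfect => e; rewrite mem_enum; apply: matching_edge.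
Qed.

Lemma psi_seq_covers l s : {in l, forall e, is_edge E e} ->
  {in l &, forall e f, eq_or_disjoint e f} -> is_perfect E s -> [set e in l] \subset psi_seq l s.
Proof.
move=> l_edge l_compat /perfect_matching_ofE[s_eq p_fpfi _].
by rewrite s_eq psi_seq_matching_of //; apply: rematch_seq_covers => // e /l_edge/card_edge.
Qed.

Lemma matching_sub_psi M s : is_matching E M -> is_perfect E s -> M \subset psi M s.
Proof.
move=> M_matching s_perfect; apply/subsetP => e eM.
apply: (subsetP (psi_seq_covers _ _ s_perfect)); rewrite ?inE ?mem_enum //.
- by move=> f; rewrite mem_enum; apply: matching_edge.
- by move=> f g; rewrite !mem_enum; apply: matching_eq_or_disjoint.
Qed.

Lemma psiC s M M' : is_perfect E s -> is_matching E (M :|: M') ->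
  psi M (psi M' s) = psi M' (psi M s).
Proof.
move=> /perfect_matching_ofE[s_eq p_fpfi _] MM'_matching.
have q_fpfi l : fpf_involution (rematch_seq l (partner s)) by apply: rematch_seq_fpf_involution.
rewrite s_eq !psi_matching_of // -!rematch_seq_cat.
congr matching_of; apply: perm_rematch_seq => //; last by rewrite perm_catC.
move=> e f; rewrite !mem_cat !mem_enum -!in_setU.
by apply: matching_eq_or_disjoint; rewrite setUC.
Qed.

Lemma mem_psi_disjoint M s e : is_perfect E s -> e \in s ->
  {in M, forall f, [disjoint e & f]} -> e \in psi M s.
Proof.
move=> /perfect_matching_ofE[s_eq p_fpfi _]; rewrite s_eq psi_matching_of // => es e_M.
by apply: matching_of_rematch_seq_disjoint => // f; rewrite mem_enum; apply: e_M.
Qed.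

Lemma psi_weakly_commutative FM : {in FM, forall M, is_matching E M} ->
  weakly_commutative E FM.
Proof.
move=> FM_matching.
exists (fun w : walk2 V => let: (f, s1, _, g, s3) := w in (g, s1, psi f s3, f, s3)); split.
  move=> [[[[f s1] s2] g] s3] [[[[f' t1] t2] g'] t3] /= [_ _ _ [_ s3A]] _ [_ _ _ [_ t3A]] _.
  move=> eq_w; move: s3A t3A; case: eq_w => -> -> _ -> ->; rewrite !inE.
  by move=> /andP[_ /eqP<-] /andP[_ /eqP<-].
move=> [[[[f s1] s2] g] s3] /= [fF gF [s1f s2A] [_ s3A]] /norP[/negbNE fg_matching _].
exists (psi f s3); split=> //.
move: s1f s2A s3A; rewrite !inE => /andP[s1_perfect _] /andP[_ /eqP s2E].
move=> /andP[s3_perfect /eqP s3E].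
have s1E : s1 = psi g (psi f s3) by rewrite -s2E -s3E psiC.
have fs3_perfect := psi_perfect (FM_matching f fF) s3_perfect.
split=> //; split; rewrite !inE.
- by rewrite s1_perfect s1E matching_sub_psi ?FM_matching.
- by rewrite fs3_perfect s1E eqxx.
- by rewrite fs3_perfect matching_sub_psi ?FM_matching.
- by rewrite s3_perfect eqxx.
Qed.

Lemma psi_potential_causality_graph FM : {in FM, forall M, is_matching E M} ->
  potential_causality_graph E FM.
Proof.
move=> FM_matching M s s' MF [_ s'A] M' _ s'M'.
have [|/norP[/negbNE MM'_matching M_neq]] := boolP (flaw_rel E M M'); [by right | left].
split; last by rewrite eq_sym.
have M_matching := FM_matching M MF.
move: s'A s'M'; rewrite !inE => /andP[s'_perfect /eqP<-] /andP[_ M'_s'].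
rewrite psi_perfect //=; apply/subsetP => e eM'.
have [eM|eNM] := boolP (e \in M).
  exact: (subsetP (matching_sub_psi M_matching s'_perfect)).
apply: mem_psi_disjoint => //; first exact: (subsetP M'_s').
move=> f fM; have /orP[/eqP ef|//] : eq_or_disjoint e f.
  by apply: (matching_eq_or_disjoint MM'_matching); rewrite inE ?eM' ?fM ?orbT.
by move: eNM; rewrite ef fM.
Qed.

End Graph.

Theorem proposition6 (V : finType) (n : nat) (E : rel V)
  (hV : #|V| = n.*2) (hG : graph_P1 E \/ graph_P2 E)
  (FM : {set {set {set V}}})
  (hF : forall M, M \in FM -> is_matching E M /\ flaw E M != set0) :
  (* (a) *)
  (forall (M : {set {set V}}) (s : {set {set V}}) (es : seq {set V}),
     is_matching E M -> is_perfect E s -> perm_eq es (enum M) ->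
     (forall i, 1 <= i <= size es ->
        [set e in take i es] \subset psi_seq (take i es) s)
     /\ M \subset psi M s) /\
  (* (b) *)
  (forall (s M M' : {set {set V}}),
     is_perfect E s -> is_matching E M -> is_matching E M' ->
     is_matching E (M :|: M') ->
     psi M (psi M' s) = psi M' (psi M s)) /\
  weakly_commutative E FM /\
  (* (c) *)
  potential_causality_graph E FM.
Proof.
have [E_irr E_sym E_closed] : [/\ irreflexive E, symmetric E & path3_closed E].
  by case: hG; [exact: graph_P1_props | exact: graph_P2_props].
have FM_matching : {in FM, forall M, is_matching E M} by move=> M /hF[].
split; [|split; [|split]].
- move=> M s es M_matching s_perfect es_M; split; last exact: matching_sub_psi.
  move=> i _; have take_M : {subset take i es <= M}.
    by move=> e /mem_take; rewrite (perm_mem es_M) mem_enum.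
  apply: psi_seq_covers => //.
    by move=> e /take_M; apply: matching_edge.
  by move=> e f /take_M eM /take_M fM; apply: (matching_eq_or_disjoint M_matching).
- by move=> s M M' s_perfect _ _; apply: psiC.
- exact: psi_weakly_commutative.
- exact: psi_potential_causality_graph.
Qed.
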